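(* Let $q\ge2$, $n\ge1$, $X=\{0,1,\ldots,q-1\}$, and consider the Insect Markov chain on $X^n$ (defined below). Let $\mathcal{L}=\{L_1,\ldots,L_k\}$ be a partition of $X^n$ with respect to which this chain is lumpable. Let $x_0,y_0\in L_r$ for some $r$, and for $i=0,\ldots,n$ and $s=1,\ldots,k$ put $\lambda_{i,s}=|\{x\in X^n: d(x_0,x)=i,\ x\in L_s\}|$ and $\mu_{i,s}=|\{y\in X^n: d(y_0,y)=i,\ y\in L_s\}|$. Then $\lambda_{i,s}=\mu_{i,s}$ for every $i=0,\ldots,n$ and $s=1,\ldots,k$.
   Context: For $x,y\in X^n$, $d(x,y)=n-\max\{m\in\{0,\ldots,n\}: x_1\cdots x_m=y_1\cdots y_m\}$ (the ultrametric on the boundary of the rooted $q$-ary tree of depth $n$). Set $\alpha_j=\frac{q^j-1}{q^{j+1}-1}$ for $1\le j\le n-1$ and $\alpha_n=0$. The Insect Markov chain on $X^n$ has transition probabilities depending only on $d(x,y)$: if $d(x,y)\in\{0,1\}$, $p(x,y)=q^{-1}(1-\alpha_1)+\sum_{i=2}^nq^{-i}\alpha_1\cdots\alpha_{i-1}(1-\alpha_i)$, and if $d(x,y)=j>1$, $p(x,y)=\sum_{i=j}^nq^{-i}\alpha_1\cdots\alpha_{i-1}(1-\alpha_i)$. A chain is lumpable with respect to a partition if for all parts $L,L'$ the map $x\mapsto\sum_{y\in L'}p(x,y)$ is constant on $L$. *)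

From mathcomp Require Import all_boot all_order all_algebra.
Set Implicit Arguments. Unset Strict Implicit. Unset Printing Implicit Defensive.
Import Order.TTheory GRing.Theory Num.Theory.

Definition word (q n : nat) := (n.-tuple 'I_q)%type.

Definition lcp (q n : nat) (x y : word q n) : nat :=
  \max_(m < n.+1 | take m x == take m y) m.

Definition dist (q n : nat) (x y : word q n) : nat := n - lcp x y.

Local Open Scope ring_scope.

Definition alpha (q n j : nat) : rat :=
  if (1 <= j <= n.-1)%N then ((q ^ j)%:R - 1) / ((q ^ j.+1)%:R - 1) else 0.

Definition alpha_prod (q n i : nat) : rat := \prod_(1 <= l < i) alpha q n l.

Definition tail_sum (q n j : nat) : rat :=
  \sum_(j <= i < n.+1) (q%:R ^- i) * alpha_prod q n i * (1 - alpha q n i).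

Definition insect_p (q n : nat) (x y : word q n) : rat :=
  if (dist x y <= 1)%N
  then q%:R^-1 * (1 - alpha q n 1) + tail_sum q n 2
  else tail_sum q n (dist x y).

Definition lumpable (q n : nat) (P : {set {set word q n}}) : Prop :=
  forall L L' : {set word q n}, L \in P -> L' \in P ->
  forall x x' : word q n, x \in L -> x' \in L ->
    \sum_(y in L') insect_p x y = \sum_(y in L') insect_p x' y.

(* Let M_j average a function over the balls of radius j; all balls of a given
   radius have the same size, and the ultrametric inequality gives
   M_i M_k = M_(max i k).  The Insect operator is a positive combination
   P = w_1 M_1 + ... + w_n M_n, so the differences E_k = M_k - M_(k+1)
   (with M_(n+1) = 0) are complementary projections with P E_k = s_k E_k,
   s_k = w_1 + ... + w_k strictly increasing.  Lumpability says that P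
   preserves the functions constant on the blocks; by Lagrange interpolation
   so does each E_k, hence each M_j.  Averaging the indicator of L_s over the
   balls of radius j around x_0 and y_0, which lie in the same block, shows
   that these balls meet L_s equally often; spheres are differences of
   consecutive balls. *)

From HB Require Import structures.
From mathcomp Require Import all_boot all_order all_algebra perm.
Set Implicit Arguments. Unset Strict Implicit. Unset Printing Implicit Defensive.
Import Order.TTheory GRing.Theory Num.Theory.

Section Ultrametric.
Variables (q n : nat).
Hypothesis q_gt0 : (0 < q)%N.
Implicit Types (x y z : word q n).

Definition agree k x y := [forall i : 'I_n, (i < k)%N ==> (tnth x i == tnth y i)].

Lemma take_eq_agree k x y : (k <= n)%N -> (take k x == take k y) = agree k x y.
Proof.
move=> kn; have a0 : 'I_q := Ordinal q_gt0.
apply/eqP/forallP => [eq_xy i|agree_xy].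
  by apply/implyP => ik; rewrite !(tnth_nth a0) -(nth_take a0 ik) eq_xy nth_take.
have size_take_k (t : word q n) : size (take k t) = k by rewrite size_takel ?size_tuple.
apply: (@eq_from_nth _ a0) => [|i]; rewrite !size_take_k // => ik.
have iN : (i < n)%N := leq_trans ik kn.
by have /implyP/(_ ik)/eqP := agree_xy (Ordinal iN); rewrite !nth_take // !(tnth_nth a0).
Qed.

Lemma leq_lcp k x y : (k <= n)%N -> (k <= lcp x y)%N = agree k x y.
Proof.
move=> kn; rewrite -take_eq_agree //; apply/idP/idP => [|eq_k]; last first.
  exact: (@leq_bigmax_cond _ _ (fun m : 'I_n.+1 => (m : nat)) (Ordinal (kn : (k < n.+1)%N))).
apply: contraTT => neq_k; rewrite -ltnNge.
case: k kn neq_k => [|k] kn neq_k; first by rewrite !take0 in neq_k.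
rewrite ltnS; apply/bigmax_leqP => m /eqP eq_m; rewrite leqNgt; apply: contra neq_k => km.
by rewrite -(take_takel x km) -(take_takel y km) eq_m.
Qed.

Lemma dist_leE j x y : (dist x y <= j)%N = agree (n - j) x y.
Proof. by rewrite /dist leq_subCl leq_lcp ?leq_subr. Qed.

Lemma agree_sym k x y : agree k x y = agree k y x.
Proof. by apply/forallP/forallP => H i; rewrite eq_sym; apply: H. Qed.

Lemma agree_trans k y x z : agree k x y -> agree k y z -> agree k x z.
Proof.
move=> /forallP xy /forallP yz; apply/forallP => i; apply/implyP => ik.
by rewrite (eqP (implyP (xy i) ik)) (implyP (yz i) ik).
Qed.

Lemma dist_sym x y : dist x y = dist y x.
Proof.
have le_sym (a b : word q n) : (dist a b <= dist b a)%N by rewrite dist_leE agree_sym -dist_leE.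
by apply/eqP; rewrite eqn_leq !le_sym.
Qed.

Lemma dist_ultra y x z : (dist x z <= maxn (dist x y) (dist y z))%N.
Proof.
by rewrite dist_leE; apply: (@agree_trans _ y); rewrite -dist_leE ?leq_maxl ?leq_maxr.
Qed.

Lemma dist_le0 x y : (dist x y <= 0)%N = (x == y).
Proof.
rewrite dist_leE subn0; apply/forallP/eqP => [xy|->]; last by move=> i; rewrite eqxx implybT.
by apply: eq_from_tnth => i; have /implyP/(_ (ltn_ord i))/eqP := xy i.
Qed.

End Ultrametric.

Section Balls.
Variables (q n : nat).
Hypothesis q_gt0 : (0 < q)%N.
Implicit Types (x y z : word q n).

Definition ball x j := [set y | (dist x y <= j)%N].

(* A coordinatewise letter permutation maps balls around [x] into balls around [x']. *)
Definition swap_letters x x' y : word q n :=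
  [tuple tperm (tnth x i) (tnth x' i) (tnth y i) | i < n].

Lemma swap_letters_inj x x' : injective (swap_letters x x').
Proof.
move=> y z /(congr1 (fun t => tnth t _)) eq_yz; apply: eq_from_tnth => i.
by have := eq_yz i; rewrite !tnth_mktuple => /perm_inj.
Qed.

Lemma card_ball x x' j : #|ball x j| = #|ball x' j|.
Proof.
suff le_ball y y' : (#|ball y j| <= #|ball y' j|)%N by apply/eqP; rewrite eqn_leq !le_ball.
rewrite -(card_imset _ (@swap_letters_inj y y')); apply/subset_leq_card/subsetP.
move=> w /imsetP [z]; rewrite !inE !dist_leE // => /forallP yz ->.
apply/forallP => i; apply/implyP => ik.
by rewrite tnth_mktuple -(eqP (implyP (yz i) ik)) tpermL.
Qed.

Lemma card_ball_gt0 x j : (0 < #|ball x j|)%N.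
Proof.
by rewrite card_gt0; apply/set0Pn; exists x; rewrite inE (leq_trans _ (leq0n j)) ?dist_le0.
Qed.

Lemma card_ballI i k x z :
  #|ball x i :&: ball z k| = if (dist x z <= maxn i k)%N then #|ball x (minn i k)| else 0%N.
Proof.
case: ifP => [xz|/negbT]; last first.
  rewrite -ltnNge => xz; apply/eqP; rewrite cards_eq0; apply/eqP/setP => y.
  rewrite !inE; apply/negP => /andP [xy zy]; move: xz; rewrite ltnNge.
  rewrite (leq_trans (dist_ultra q_gt0 y x z)) // geq_max !leq_max xy /=.
  by rewrite (dist_sym q_gt0 y z) zy orbT.
wlog ik : i k x z xz / (i <= k)%N.
  move=> le_case; case: (leqP i k) => [ik|/ltnW ki]; first by rewrite le_case // (minn_idPl ik).
  have zx : (dist z x <= maxn k i)%N by rewrite maxnC (dist_sym q_gt0).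
  by rewrite setIC le_case // (minn_idPl ki) (card_ball z x).
have xz_k : (dist x z <= k)%N by rewrite -(maxn_idPr ik).
suff /setIidPl -> : ball x i \subset ball z k by rewrite (minn_idPl ik).
apply/subsetP => y; rewrite !inE => xy.
by rewrite (leq_trans (dist_ultra q_gt0 x z y)) // geq_max (dist_sym q_gt0) xz_k (leq_trans xy ik).
Qed.

End Balls.

Local Open Scope ring_scope.

Section EigenProjections.
Variables (F : fieldType) (V : lmodType F) (W : {pred V}).
Hypothesis W_submod : submod_closed W.
HB.instance Definition _ := GRing.isSubmodClosed.Build F V W (GRing.submod_closed_semi W_submod).
Variable A : {linear V -> V}.
Hypothesis A_stable : forall f, f \in W -> A f \in W.
Variables (n : nat) (E : nat -> V -> V) (s : nat -> F).
Hypothesis E_sum : forall f, \sum_(k < n.+1) E k f = f.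
Hypothesis A_E : forall k f, (k <= n)%N -> A (E k f) = s k *: E k f.
Hypothesis s_inj : {in [pred k | k <= n]%N &, injective s}.

Let shifted_prod (ls : seq nat) (f : V) : V := foldr (fun l g => A g - s l *: g) f ls.

Let shifted_prod_stable ls f : f \in W -> shifted_prod ls f \in W.
Proof. by move=> Wf; elim: ls => //= l ls IH; rewrite rpredB ?rpredZ ?A_stable. Qed.

Let shifted_prod_sum ls I r (P : pred I) (G : I -> V) :
  shifted_prod ls (\sum_(i <- r | P i) G i) = \sum_(i <- r | P i) shifted_prod ls (G i).
Proof. by elim: ls => //= l ls ->; rewrite linear_sum scaler_sumr -sumrB. Qed.

Let shifted_prod_E ls m f : (m <= n)%N ->
  shifted_prod ls (E m f) = (\prod_(l <- ls) (s m - s l)) *: E m f.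
Proof.
move=> mn; elim: ls => [|l ls IH] /=; first by rewrite big_nil scale1r.
by rewrite IH linearZZ A_E // big_cons !scalerA -scalerBl mulrBl mulrC.
Qed.

Lemma eigenprojection_stable k f : (k <= n)%N -> f \in W -> E k f \in W.
Proof.
(* [\prod_(l != k) (A - s l)] kills every [E m] with [m != k] and scales [E k]. *)
move=> kn Wf; set ls := [seq l <- iota 0 n.+1 | l != k].
have c_neq0 : \prod_(l <- ls) (s k - s l) != 0.
  rewrite prodf_seq_neq0; apply/allP => l; rewrite mem_filter mem_iota /= => /andP [lk ln].
  by rewrite subr_eq0; apply: contra lk => /eqP /s_inj -> //; rewrite inE.
have : shifted_prod ls f = (\prod_(l <- ls) (s k - s l)) *: E k f.
  rewrite -{1}(E_sum f) shifted_prod_sum (bigD1 (Ordinal (kn : (k < n.+1)%N))) //=.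
  rewrite shifted_prod_E // [X in _ + X]big1 ?addr0 // => m mk.
  have mls : (m : nat) \in ls.
    rewrite mem_filter mem_iota add0n ltn_ord leq0n !andbT.
    by apply: contra mk => /eqP mk; rewrite -val_eqE /= mk.
  by rewrite shifted_prod_E -1?ltnS // (big_rem _ mls) /= subrr mul0r scale0r.
move=> /(congr1 ( *:%R (\prod_(l <- ls) (s k - s l))^-1)).
rewrite scalerA mulVf // scale1r => <-.
by rewrite rpredZ // shifted_prod_stable.
Qed.

End EigenProjections.

Section NestedAverages.
Variables (F : numFieldType) (V : lmodType F) (W : {pred V}).
Hypothesis W_submod : submod_closed W.
HB.instance Definition _ := GRing.isSubmodClosed.Build F V W (GRing.submod_closed_semi W_submod).
Variables (n : nat) (M : nat -> {linear V -> V}) (w : nat -> F) (A : {linear V -> V}).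
Hypothesis M0 : forall f, M 0 f = f.
Hypothesis M_comp : forall i k f, (i <= n)%N -> (k <= n)%N -> M i (M k f) = M (maxn i k) f.
Hypothesis A_sum : forall f, A f = \sum_(1 <= i < n.+1) w i *: M i f.
Hypothesis w_gt0 : forall i, (0 < i <= n)%N -> 0 < w i.
Hypothesis A_stable : forall f, f \in W -> A f \in W.

(* Extending [M] by 0 beyond [n] makes the [E k] sum to the identity. *)
Let Mt j f := if (j <= n)%N then M j f else 0.
Let E k f := Mt k f - Mt k.+1 f.
Let s k := \sum_(1 <= i < k.+1) w i.

Let M_Mt i k f : (i <= n)%N -> M i (Mt k f) = Mt (maxn i k) f.
Proof.
rewrite /Mt geq_max => iN; rewrite iN; case: leqP => kn /=; first exact: M_comp.
by rewrite raddf0.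
Qed.

Let Mt_telescope j f : (j <= n.+1)%N -> \sum_(j <= k < n.+1) E k f = Mt j f.
Proof.
move=> jn; have -> : Mt j f = Mt j f - Mt n.+1 f by rewrite /Mt ltnn subr0.
rewrite -opprB -(telescope_sumr (fun k => Mt k f) jn) -sumrN.
by apply: eq_bigr => k _; rewrite opprB.
Qed.

Let A_E k f : (k <= n)%N -> A (E k f) = s k *: E k f.
Proof.
move=> kn; rewrite linearB /= !A_sum -sumrB (@big_cat_nat _ _ _ k.+1) //= -?ltnS //.
have low : \sum_(1 <= i < k.+1) (w i *: M i (Mt k f) - w i *: M i (Mt k.+1 f))
    = s k *: E k f.
  rewrite /s scaler_suml; apply: eq_big_nat => i /andP [_ /[!ltnS] ik].
  have iN : (i <= n)%N := leq_trans ik kn.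
  by rewrite -scalerBr !M_Mt // (maxn_idPr ik) (maxn_idPr (leqW ik)).
rewrite low [X in _ + X]big_nat big1 ?addr0 // => i /andP [ki iN].
by rewrite -scalerBr !M_Mt // (maxn_idPl (ltnW ki)) (maxn_idPl ki) subrr scaler0.
Qed.

Let s_lt l m : (l < m)%N -> (m <= n)%N -> s l < s m.
Proof.
elim: m => // m IH lm mn.
have -> : s m.+1 = s m + w m.+1 by rewrite /s big_nat_recr.
have le_lm : s l <= s m.
  case: (ltngtP l m) => [lm'|ml|->] //; first exact/ltW/IH/ltnW.
  by move: lm; rewrite ltnS leqNgt ml.
by rewrite (le_lt_trans le_lm) // ltrDl w_gt0.
Qed.

Let s_inj : {in [pred k | k <= n]%N &, injective s}.
Proof.
move=> l m; rewrite !inE => ln mn /eqP; apply: contraTeq; rewrite neq_ltn.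
by case/orP => [lm|ml]; [rewrite lt_eqF ?s_lt | rewrite gt_eqF ?s_lt].
Qed.

Lemma average_stable j f : (j <= n)%N -> f \in W -> M j f \in W.
Proof.
move=> jn Wf; have -> : M j f = Mt j f by rewrite /Mt jn.
rewrite -Mt_telescope ?leqW //.
rewrite big_nat rpred_sum // => k /andP [_ kn].
apply: (eigenprojection_stable W_submod A_stable _ A_E s_inj) => //.
by move=> g; rewrite -(big_mkord xpredT (E ^~ g)) Mt_telescope // /Mt leq0n M0.
Qed.

End NestedAverages.

Section BallAverages.
Variables (F : numFieldType) (q n : nat).
Hypothesis q_gt0 : (0 < q)%N.
Local Notation V := {ffun word q n -> F^o}.

Definition ball_avg j (f : V) : V :=
  [ffun x => #|ball x j|%:R^-1 * \sum_(y in ball x j) f y].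

Lemma ball_avg_is_linear j : linear (ball_avg j).
Proof.
move=> a f g; apply/ffunP => x; rewrite !ffunE.
under eq_bigr do rewrite !ffunE.
by rewrite big_split /= mulrDr -scaler_sumr mulrCA.
Qed.

HB.instance Definition _ j := GRing.isLinear.Build F V V *:%R (ball_avg j) (ball_avg_is_linear j).

Lemma ball_avg0 f : ball_avg 0 f = f.
Proof.
apply/ffunP => x; rewrite ffunE (_ : ball x 0 = [set x]) ?cards1 ?big_set1 ?invr1 ?mul1r //.
by apply/setP => y; rewrite !inE dist_le0 // eq_sym.
Qed.

Lemma ball_avg_indicator (A : {set word q n}) x j :
  ball_avg j [ffun y => ((y \in A) : nat)%:R : F^o] x = #|ball x j|%:R^-1 * #|A :&: ball x j|%:R.
Proof.
rewrite !ffunE; congr (_ * _); rewrite (big_setID A) /= addrC big1 ?add0r.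
  rewrite -sum1_card natr_sum; apply: eq_big => y; first by rewrite setIC.
  by rewrite !inE ffunE => /andP [_ ->].
by move=> y; rewrite !inE ffunE => /andP [/negbTE ->].
Qed.


Lemma sum_ball_ball (f : V) x i k :
  \sum_(y in ball x i) \sum_(z in ball y k) f z =
  \sum_z #|ball x i :&: ball z k|%:R * f z.
Proof.
under eq_bigr do rewrite big_mkcond /=.
rewrite exchange_big /=; apply: eq_bigr => z _.
rewrite -big_mkcondr /= sumr_const mulr_natl; congr (_ *+ _).
by apply: eq_card => y; rewrite unfold_in /= !inE (dist_sym q_gt0 y z).
Qed.

Lemma ball_avg_comp i k (f : V) : ball_avg i (ball_avg k f) = ball_avg (maxn i k) f.
Proof.
apply/ffunP => x; rewrite !ffunE.
under eq_bigr => y _ do rewrite ffunE (card_ball q_gt0 y x).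
rewrite -mulr_sumr sum_ball_ball.
under eq_bigr do rewrite (card_ballI q_gt0) (fun_if (GRing.natmul 1)) mulr0n.
rewrite (bigID (fun z => z \in ball x (maxn i k))) /= [X in _ + X]big1 ?addr0; last first.
  by move=> z; rewrite inE => /negbTE ->; rewrite mul0r.
rewrite (eq_bigr (fun z => #|ball x (minn i k)|%:R * f z)); last by move=> z; rewrite inE => ->.
rewrite -mulr_sumr !mulrA; congr (_ * _).
have b_neq0 j : #|ball x j|%:R != 0 :> F by rewrite pnatr_eq0 -lt0n card_ball_gt0.
by case: (leqP i k) => _; rewrite ?divfK // mulrAC mulVf ?mul1r.
Qed.

End BallAverages.

Section InsectOperator.
Variables (q n : nat).
Hypotheses (q_ge2 : (2 <= q)%N) (n_gt0 : (0 < n)%N).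
Local Notation V := {ffun word q n -> rat^o}.

Let q_gt0 : (0 < q)%N. Proof. exact: ltnW. Qed.

Definition insect_coef i : rat := q%:R ^- i * alpha_prod q n i * (1 - alpha q n i).

Lemma insect_pE (x y : word q n) :
  insect_p x y = \sum_(1 <= i < n.+1) insect_coef i * ((dist x y <= i)%N)%:R.
Proof.
rewrite /insect_p; case: ifP => [le1|/negbT]; last rewrite -ltnNge => gt1.
  rewrite big_ltn ?ltnS // le1 mulr1 /insect_coef /alpha_prod big_geq // mulr1.
  congr (_ + _); apply: eq_big_nat => i /andP [le2i _].
  by rewrite (leq_trans le1 (ltnW le2i)) mulr1.
rewrite (@big_cat_nat _ _ _ (dist x y)) ?(ltnW gt1) ?leqW ?leq_subr //=.
rewrite big_nat big1 ?add0r => [|i /andP [_ lt_i]]; last by rewrite leqNgt lt_i mulr0.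
by apply: eq_big_nat => i /andP [le_i _]; rewrite le_i mulr1.
Qed.

Let q_pow_gt1 m : (0 < m)%N -> 1 < (q ^ m)%:R :> rat.
Proof. by move=> m_gt0; rewrite ltr1n (leq_trans q_ge2) // -{1}(expn1 q) leq_pexp2l // ltnW. Qed.

Lemma alpha_lt1 l : alpha q n l < 1.
Proof.
rewrite /alpha; case: ifP => // /andP [l_gt0 _].
by rewrite ltr_pdivrMr ?subr_gt0 ?q_pow_gt1 // mul1r ltrD2r ltr_nat ltn_exp2l.
Qed.

Lemma alpha_gt0 l : (0 < l <= n.-1)%N -> 0 < alpha q n l.
Proof.
by move=> l_range; rewrite /alpha l_range divr_gt0 // subr_gt0 q_pow_gt1 //; case/andP: l_range.
Qed.

Lemma insect_coef_gt0 i : (0 < i <= n)%N -> 0 < insect_coef i.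
Proof.
case/andP => i_gt0 le_in; rewrite !mulr_gt0 ?subr_gt0 ?alpha_lt1 //.
  by rewrite invr_gt0 exprn_gt0 // ltr0n.
rewrite /alpha_prod big_nat prodr_gt0 // => l /andP [l_gt0 lt_li].
by rewrite alpha_gt0 // l_gt0 -ltnS prednK // (leq_trans lt_li).
Qed.

Definition insect_op (f : V) : V := [ffun x => \sum_y insect_p x y * f y].

Lemma insect_op_is_linear : linear insect_op.
Proof.
move=> a f g; apply/ffunP => x; rewrite !ffunE.
under eq_bigr do rewrite !ffunE mulrDr.
by rewrite big_split /= scaler_sumr; congr (_ + _); apply: eq_bigr => y _; rewrite mulrCA.
Qed.

HB.instance Definition _ := GRing.isLinear.Build rat V V *:%R insect_op insect_op_is_linear.

Lemma insect_op_ball_avg (c : word q n) f :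
  insect_op f = \sum_(1 <= i < n.+1) (insect_coef i * #|ball c i|%:R) *: ball_avg i f.
Proof.
apply/ffunP => x; rewrite !ffunE sum_ffunE.
under eq_bigr do rewrite insect_pE big_distrl /=.
rewrite exchange_big /=; apply: eq_bigr => i _; rewrite !ffunE (card_ball q_gt0 c x).
have b_neq0 : #|ball x i|%:R != 0 :> rat by rewrite pnatr_eq0 -lt0n (card_ball_gt0 q_gt0).
rewrite -[_ *: _]/(_ * _) -mulrA mulVKf // big_distrr /= [RHS]big_mkcond; apply: eq_bigr => y _.
by rewrite inE; case: ifP; rewrite ?mulr1 ?mulr0 ?mul0r.
Qed.

End InsectOperator.

Section Lumpability.
Variables (q n : nat) (P : {set {set word q n}}).
Hypotheses (q_ge2 : (2 <= q)%N) (n_gt0 : (0 < n)%N).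
Hypotheses (P_partition : partition P [set: word q n]) (P_lumpable : lumpable P).
Local Notation V := {ffun word q n -> rat^o}.

Definition blockwise_constant : {pred V} :=
  [pred f : V | [forall L in P, forall x in L, forall y in L, f x == f y]].

Lemma blockwise_constantP (f : V) :
  reflect (forall L x y, L \in P -> x \in L -> y \in L -> f x = f y) (f \in blockwise_constant).
Proof.
apply: (iffP forall_inP) => [fP L x y LP xL yL|fP L LP].
  by move/forall_inP/(_ x xL)/forall_inP/(_ y yL)/eqP: (fP L LP).
by apply/forall_inP => x xL; apply/forall_inP => y yL; rewrite (fP L x y).
Qed.

Lemma blockwise_constant_submod : submod_closed blockwise_constant.
Proof.
split=> [|a f g /blockwise_constantP fP /blockwise_constantP gP].
  by apply/blockwise_constantP => L x y _ _ _; rewrite !ffunE.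
by apply/blockwise_constantP => L x y LP xL yL; rewrite !ffunE (fP L x y) ?(gP L x y).
Qed.

Lemma indicator_blockwise_constant A : A \in P ->
  [ffun y => ((y \in A) : nat)%:R] \in blockwise_constant.
Proof.
move=> AP; apply/blockwise_constantP => L x y LP xL yL; rewrite !ffunE.
have trivP := partition_trivIset P_partition.
have inAE z : z \in L -> (z \in A) = (A == L).
  move=> zL; apply/idP/eqP => [zA|-> //].
  by rewrite -(def_pblock trivP AP zA) (def_pblock trivP LP zL).
by rewrite !inAE.
Qed.

Lemma insect_op_blockwise_constant (f : V) :
  f \in blockwise_constant -> insect_op f \in blockwise_constant.
Proof.
move=> /blockwise_constantP fP; apply/blockwise_constantP => L x x' LP xL x'L.
have sum_blocks z : insect_op f z = \sum_(L' in P) \sum_(y in L') insect_p z y * f y.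
  rewrite ffunE -(big_trivIset _ (partition_trivIset P_partition)) (cover_partition P_partition).
  by apply: eq_bigl => y; rewrite in_setT.
rewrite !sum_blocks; apply: eq_bigr => L' L'P.
have [->|[y0 y0L']] := set_0Vmem L'; first by rewrite !big_set0.
have const z : \sum_(y in L') insect_p z y * f y = (\sum_(y in L') insect_p z y) * f y0.
  by rewrite big_distrl /=; apply: eq_bigr => y yL'; rewrite (fP L' y y0).
by rewrite !const (P_lumpable LP L'P xL x'L).
Qed.

Lemma ball_avg_blockwise_constant j (f : V) : (j <= n)%N ->
  f \in blockwise_constant -> ball_avg j f \in blockwise_constant.
Proof.
have q_gt0 : (0 < q)%N := ltnW q_ge2; pose c : word q n := [tuple of nseq n (Ordinal q_gt0)].
apply: (@average_stable _ _ _ blockwise_constant_submod n (fun j => ball_avg j : {linear _ -> _})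
  (fun i => insect_coef q n i * #|ball c i|%:R) (@insect_op q n)).
- exact: ball_avg0.
- by move=> i k g _ _; rewrite /= (ball_avg_comp q_gt0).
- exact: insect_op_ball_avg.
- by move=> i i_range; rewrite mulr_gt0 ?insect_coef_gt0 // ltr0n card_ball_gt0.
- exact: insect_op_blockwise_constant.
Qed.

End Lumpability.

Lemma card_sphere_eq q n (A : {set word q n}) x y i :
  (forall j, (j <= i)%N -> #|A :&: ball x j| = #|A :&: ball y j|) ->
  #|[set z in A | dist x z == i]| = #|[set z in A | dist y z == i]|.
Proof.
case: i => [|i] ball_eq.
  have sphereE u : [set z in A | dist u z == 0] = A :&: ball u 0.
    by apply/setP => z; rewrite !inE leqn0.
  by rewrite !sphereE ball_eq.
have sphereE u : [set z in A | dist u z == i.+1] = (A :&: ball u i.+1) :\: (A :&: ball u i).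
  by apply/setP => z; rewrite !inE; case: (z \in A); rewrite //= eqn_leq -ltnNge andbC.
have sub u : A :&: ball u i \subset A :&: ball u i.+1.
  by apply/subsetP => z; rewrite !inE => /andP [-> /leqW].
by rewrite !sphereE !cardsD !(setIidPr (sub _)) !ball_eq.
Qed.

Theorem theorem12 (q n : nat) (hq : (2 <= q)%N) (hn : (1 <= n)%N)
  (P : {set {set word q n}})
  (hP : partition P [set: word q n])
  (hlump : lumpable P)
  (Lr : {set word q n}) (hLr : Lr \in P)
  (x0 y0 : word q n) (hx0 : x0 \in Lr) (hy0 : y0 \in Lr) :
  forall (i : nat), (i <= n)%N ->
  forall Ls : {set word q n}, Ls \in P ->
    #|[set x in Ls | dist x0 x == i]| = #|[set y in Ls | dist y0 y == i]|.
Proof.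
move=> i le_in Ls LsP; apply: card_sphere_eq => j le_ji; have q_gt0 : (0 < q)%N := ltnW hq.
have := ball_avg_blockwise_constant hq hn hP hlump (leq_trans le_ji le_in)
  (indicator_blockwise_constant hP LsP).
move=> /blockwise_constantP/(_ Lr x0 y0 hLr hx0 hy0).
have inv_neq0 : #|ball x0 j|%:R^-1 != 0 :> rat by rewrite invr_eq0 pnatr_eq0 -lt0n card_ball_gt0.
rewrite !ball_avg_indicator (card_ball q_gt0 y0 x0) => /(mulfI inv_neq0)/eqP.
by rewrite eqr_nat => /eqP.
Qed.
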